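(* Let $f_1$ and $g_1$ be smooth functions of one variable and consider the equation $$m_t+u_xf_1(u^2-u_x^2)\,m+\Big(\big(uf_1(u^2-u_x^2)+g_1(u^2-u_x^2)\big)m\Big)_x=0,\qquad m=u-u_{xx}.$$ No smooth solitary travelling wave solutions of this equation exist with arbitrary wave speed: for every constant $c\neq0$ with $c\neq g_1(0)$ there is no smooth solitary travelling wave solution with speed $c$. In particular, if $g_1(0)=0$, no smooth solitary travelling wave solutions exist (neither with arbitrary nor with a fixed wave speed).
   Context: A smooth solitary travelling wave solution with speed $c\neq0$ is a solution of the form $u=U(\xi)$, $\xi=x-ct$, with $U$ smooth and not identically zero, such that $U$ and its derivatives tend to zero as $|\xi|\to\infty$. *)

From Stdlib Require Import Reals.
From Coquelicot Require Import Coquelicot.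
Open Scope R_scope.

Definition smooth (f : R -> R) : Prop :=
  forall (n : nat) (x : R), ex_derive_n f n x.

Definition d_x (u : R -> R -> R) : R -> R -> R :=
  fun t x => Derive (fun y => u t y) x.
Definition d_t (u : R -> R -> R) : R -> R -> R :=
  fun t x => Derive (fun s => u s x) t.

Definition solves_eq (f1 g1 : R -> R) (u : R -> R -> R) : Prop :=
  let ux := d_x u in
  let m := fun t x => u t x - d_x ux t x in
  let w := fun t x => (u t x)^2 - (ux t x)^2 in
  forall t x : R,
    d_t m t x + ux t x * f1 (w t x) * m t x
    + d_x (fun t' y => (u t' y * f1 (w t' y) + g1 (w t' y)) * m t' y) t x = 0.

Definition smooth_solitary_tw (f1 g1 : R -> R) (c : R) (U : R -> R) : Prop :=
  smooth U /\
  (exists xi : R, U xi <> 0) /\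
  (forall n : nat,
      is_lim (Derive_n U n) p_infty 0 /\ is_lim (Derive_n U n) m_infty 0) /\
  solves_eq f1 g1 (fun t x => U (x - c * t)).

(* Write the wave as u(t, x) = U(x - c t) and put w = U^2 - U'^2, m = U - U'', so that
   w' = 2 U' m.  The profile equation -c m' + U' f1(w) m + ((U f1(w) + g1(w)) m)' = 0 is then a
   total derivative, and as U, U', U'' vanish at +oo it integrates to
   2 (U f1(w) + g1(w) - c) m + F1(w) = 0, with F1, G1 the primitives of f1, g1 vanishing at 0.
   Multiplied by U' this is again a total derivative, whence U F1(w) + G1(w) - c w = 0, i.e.
   w h = 0 for h = U F1(w)/w + G1(w)/w - c, where F(w)/w stands for f(0) at w = 0.  Since h
   tends to g1(0) - c <> 0 at +oo, w vanishes on a half line, while it does not vanish where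
   U^2 is maximal; at a = sup {w <> 0} we get w(a) = w'(a) = 0 and zeros of h clustering at a
   from the left.  Hence h(a) = h'(a) = 0, and as w is flat at a these read
   U(a) f1(0) + g1(0) = c and U'(a) f1(0) = 0.  So U'(a) = 0, hence U(a) = 0 because w(a) = 0,
   and then c = g1(0). *)

From Stdlib Require Import Reals Lra Classical FunctionalExtensionality.
From Coquelicot Require Import Coquelicot.
Open Scope R_scope.

Lemma is_derive_approx f x l :
  is_derive f x l <->
  forall e, 0 < e -> exists d, 0 < d /\
    forall y, Rabs (y - x) < d -> Rabs (f y - f x - l * (y - x)) <= e * Rabs (y - x).
Proof.
  rewrite is_derive_Reals. split.
  - intros H e He. destruct (H e He) as [d Hd]. exists d. split; [apply cond_pos|].
    intros y Hy. destruct (Req_dec y x) as [->|Hne].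
    + replace (f x - f x - l * (x - x)) with 0 by ring.
      rewrite Rminus_diag, Rabs_R0. lra.
    + specialize (Hd (y - x) ltac:(lra) Hy). replace (x + (y - x)) with y in Hd by ring.
      replace (f y - f x - l * (y - x)) with ((y - x) * ((f y - f x) / (y - x) - l))
        by (field; lra).
      rewrite Rabs_mult, Rmult_comm. apply Rmult_le_compat_r; [apply Rabs_pos | lra].
  - intros H e He. destruct (H (e / 2) ltac:(lra)) as [d [Hd Hy]].
    exists (mkposreal d Hd). intros k Hk Hkd. simpl in Hkd.
    specialize (Hy (x + k)). replace (x + k - x) with k in Hy by ring.
    specialize (Hy Hkd).
    replace ((f (x + k) - f x) / k - l) with ((f (x + k) - f x - l * k) / k) by (field; lra).
    assert (Habs : 0 < Rabs k) by (apply Rabs_pos_lt; exact Hk).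
    rewrite Rabs_div by exact Hk. apply Rlt_div_l; [exact Habs | nra].
Qed.

Lemma is_derive_at_cluster_of_zeros f a l :
  is_derive f a l ->
  (forall r, 0 < r -> exists y, 0 < Rabs (y - a) < r /\ f y = 0) ->
  f a = 0 /\ l = 0.
Proof.
  intros Hd Hz. pose proof (proj1 (is_derive_approx f a l) Hd) as Happ.
  assert (Hfa : f a = 0).
  { apply cond_eq. intros e He. rewrite Rminus_0_r.
    destruct (Happ 1 Rlt_0_1) as [d [Hd0 Hy]].
    pose proof (Rabs_pos l) as Hl.
    assert (Hr : 0 < Rmin d (e / (1 + Rabs l)))
      by (apply Rmin_glb_lt; [lra | apply Rdiv_lt_0_compat; lra]).
    destruct (Hz _ Hr) as [y [[Hy0 Hy1] Hfy]].
    specialize (Hy y (Rlt_le_trans _ _ _ Hy1 (Rmin_l _ _))).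
    assert (Hye : Rabs (y - a) * (1 + Rabs l) < e).
    { apply Rlt_div_r; [lra|]. eapply Rlt_le_trans; [exact Hy1 | apply Rmin_r]. }
    rewrite Hfy in Hy.
    pose proof (Rabs_triang (0 - f a - l * (y - a)) (l * (y - a))) as T.
    replace (0 - f a - l * (y - a) + l * (y - a)) with (- f a) in T by ring.
    rewrite Rabs_Ropp, Rabs_mult in T. nra. }
  split; [exact Hfa|].
  apply cond_eq. intros e He. rewrite Rminus_0_r.
  destruct (Happ (e / 2) ltac:(lra)) as [d [Hd0 Hy]].
  destruct (Hz d Hd0) as [y [[Hy0 Hy1] Hfy]].
  specialize (Hy y Hy1). rewrite Hfy, Hfa in Hy.
  replace (0 - 0 - l * (y - a)) with (- (l * (y - a))) in Hy by ring.
  rewrite Rabs_Ropp, Rabs_mult in Hy. nra.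
Qed.

Lemma exists_right_end_of_support (W : R -> R) :
  (forall x, ex_derive W x) -> (exists M, forall x, M < x -> W x = 0) -> (exists x, W x <> 0) ->
  exists a, W a = 0 /\ is_derive W a 0 /\
    forall r, 0 < r -> exists y, a - r < y < a /\ W y <> 0.
Proof.
  intros HW [M HM] Hnz.
  destruct (completeness (fun x => W x <> 0)) as [a [Hub Hlub]]; [|exact Hnz|].
  { exists M. intros x Hx. destruct (Rle_dec x M) as [|Hgt]; [assumption|].
    contradiction (Hx (HM x ltac:(lra))). }
  assert (Hright : forall x, a < x -> W x = 0).
  { intros x Hx. apply NNPP. intro Hw. specialize (Hub x Hw). lra. }
  pose proof (Derive_correct _ _ (HW a)) as HdW.
  destruct (is_derive_at_cluster_of_zeros _ a _ HdW) as [Hwa Hdwa].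
  { intros r Hr. exists (a + r / 2). split; [split_Rabs; lra | apply Hright; lra]. }
  exists a. rewrite Hdwa in HdW. split; [exact Hwa|]. split; [exact HdW|].
  intros r Hr. apply NNPP. intro Hno.
  assert (a <= a - r); [|lra].
  apply Hlub. intros x Hx. destruct (Rle_dec x (a - r)) as [|Hgt]; [assumption|].
  assert (x <> a) by (intros ->; contradiction).
  specialize (Hub x Hx). contradiction Hno. exists x. split; [lra | exact Hx].
Qed.

Lemma is_derive_global_max f m l : is_derive f m l -> (forall x, f x <= f m) -> l = 0.
Proof.
  intros Hd Hmax. apply is_derive_Reals in Hd.
  exact (deriv_maximum f (m - 1) (m + 1) m (exist _ l Hd) ltac:(lra) ltac:(lra)
           (fun x _ _ => Hmax x)).
Qed.

Lemma is_derive_0_is_lim_0 F :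
  (forall x, is_derive F x 0) -> is_lim F p_infty 0 -> forall x, F x = 0.
Proof.
  intros Hd Hlim x.
  assert (Hconst : forall y, F y = F x).
  { intro y. destruct (MVT_gen F x y (fun _ => 0)) as [t [_ Ht]].
    - intros; apply Hd.
    - intros z _. apply derivable_continuous_pt. exists 0. apply is_derive_Reals, Hd.
    - lra. }
  apply (is_lim_ext F (fun _ => F x)) in Hlim; [|exact Hconst].
  apply is_lim_unique in Hlim. rewrite Lim_const in Hlim. injection Hlim; auto.
Qed.

Lemma is_lim_mult_finite f g x (a b : R) :
  is_lim f x a -> is_lim g x b -> is_lim (fun y => f y * g y) x (a * b).
Proof. intros Ha Hb. exact (is_lim_mult f g x a b Ha Hb I). Qed.

Lemma is_lim_nonzero_eventually f (l : R) :
  is_lim f p_infty l -> l <> 0 -> exists M, forall x, M < x -> f x <> 0.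
Proof.
  intros H Hl. apply is_lim_spec in H.
  destruct (H (mkposreal (Rabs l) (Rabs_pos_lt l Hl))) as [M HM].
  exists M. intros x Hx Hfx. specialize (HM x Hx). simpl in HM.
  rewrite Hfx, Rminus_0_l, Rabs_Ropp in HM. lra.
Qed.

Lemma continuous_vanishing_at_infinity_max F x0 :
  (forall x, continuous F x) -> is_lim F p_infty 0 -> is_lim F m_infty 0 -> 0 < F x0 ->
  exists m, forall x, F x <= F m.
Proof.
  intros Hc Hp Hm Hx0.
  apply is_lim_spec in Hp. apply is_lim_spec in Hm.
  destruct (Hp (mkposreal _ Hx0)) as [M1 HM1]. destruct (Hm (mkposreal _ Hx0)) as [M2 HM2].
  simpl in HM1, HM2.
  assert (Hab : Rmin M2 x0 <= Rmax M1 x0)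
    by (eapply Rle_trans; [apply Rmin_r | apply Rmax_r]).
  destruct (continuity_ab_maj F _ _ Hab) as [m [Hmax Hm_ab]].
  { intros x _. apply continuity_pt_filterlim, Hc. }
  exists m. intro x.
  assert (Hx0m : F x0 <= F m) by (apply Hmax; split; [apply Rmin_r | apply Rmax_r]).
  destruct (Rle_lt_dec x (Rmax M1 x0)) as [Hxb|Hxb];
    [destruct (Rle_lt_dec (Rmin M2 x0) x) as [Hxa|Hxa]|].
  - apply Hmax; lra.
  - assert (Hx : x < M2) by (eapply Rlt_le_trans; [exact Hxa | apply Rmin_l]).
    specialize (HM2 x Hx). rewrite Rminus_0_r in HM2. apply Rabs_def2 in HM2. lra.
  - assert (Hx : M1 < x) by (eapply Rle_lt_trans; [apply Rmax_l | exact Hxb]).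
    specialize (HM1 x Hx). rewrite Rminus_0_r in HM1. apply Rabs_def2 in HM1. lra.
Qed.

Definition lipschitz_at (phi : R -> R) (x : R) : Prop :=
  exists d L, 0 < d /\ forall y, Rabs (y - x) < d -> Rabs (phi y - phi x) <= L * Rabs (y - x).

Lemma continuous_lipschitz_at phi x : lipschitz_at phi x -> continuous phi x.
Proof.
  intros [d [L [Hd HL]]]. apply continuity_pt_filterlim. intros e He.
  pose proof (Rabs_pos L).
  exists (Rmin d (e / (Rabs L + 1))).
  split; [apply Rmin_glb_lt; [lra | apply Rdiv_lt_0_compat; lra]|].
  intros y [_ Hy]. simpl in *. unfold R_dist in *.
  specialize (HL y (Rlt_le_trans _ _ _ Hy (Rmin_l _ _))).
  assert (Hy' : Rabs (y - x) * (Rabs L + 1) < e)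
    by (apply Rlt_div_r; [lra | eapply Rlt_le_trans; [exact Hy | apply Rmin_r]]).
  pose proof (Rle_abs L). pose proof (Rabs_pos (y - x)). nra.
Qed.

Lemma is_derive_comp_flat (phi W : R -> R) a :
  lipschitz_at phi (W a) -> is_derive W a 0 -> is_derive (fun y => phi (W y)) a 0.
Proof.
  intros [d [L [Hd HL]]] HW. apply is_derive_approx. intros e He.
  pose proof (Rabs_pos L) as HL0.
  set (e' := Rmin 1 (e / (Rabs L + 1))).
  assert (He' : 0 < e') by (apply Rmin_glb_lt; [lra | apply Rdiv_lt_0_compat; lra]).
  assert (He'1 : e' <= 1) by apply Rmin_l.
  assert (He'L : Rabs L * e' <= e).
  { apply Rle_trans with ((Rabs L + 1) * (e / (Rabs L + 1))).
    - apply Rmult_le_compat; [lra | lra | lra | apply Rmin_r].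
    - right. field. lra. }
  destruct (proj1 (is_derive_approx W a 0) HW e' He') as [dW [HdW HWapp]].
  exists (Rmin dW d). split; [apply Rmin_glb_lt; lra|]. intros y Hy.
  pose proof (Rmin_l dW d). pose proof (Rmin_r dW d). pose proof (Rabs_pos (y - a)).
  specialize (HWapp y ltac:(lra)). rewrite Rmult_0_l, Rminus_0_r in HWapp |- *.
  specialize (HL (W y) ltac:(nra)).
  pose proof (Rle_abs L). pose proof (Rabs_pos (W y - W a)). nra.
Qed.

Definition antideriv (f : R -> R) (w : R) : R := RInt f 0 w.

Lemma is_derive_antideriv (f : R -> R) :
  (forall x, continuous f x) -> forall w, is_derive (antideriv f) w (f w).
Proof.
  intros Hc w. unfold antideriv. apply is_derive_RInt with (a := 0); [|apply Hc].
  apply filter_forall. intro b.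
  apply (RInt_correct (V := R_CompleteNormedModule)), ex_RInt_continuous. intros; apply Hc.
Qed.

Lemma antideriv_0 f : antideriv f 0 = 0.
Proof. exact (RInt_point (V := R_CompleteNormedModule) 0 f). Qed.

Definition mean_value (f : R -> R) (w : R) : R :=
  if Req_EM_T w 0 then f 0 else antideriv f w / w.

Lemma antideriv_mean_value f w : antideriv f w = w * mean_value f w.
Proof.
  unfold mean_value. destruct (Req_EM_T w 0) as [->|Hw].
  - rewrite antideriv_0. ring.
  - field. exact Hw.
Qed.

Lemma mean_value_0 f : mean_value f 0 = f 0.
Proof. unfold mean_value. destruct (Req_EM_T 0 0); [reflexivity | lra]. Qed.

Lemma lipschitz_at_mean_value_0 (f : R -> R) l :
  (forall x, continuous f x) -> is_derive f 0 l -> lipschitz_at (mean_value f) 0.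
Proof.
  intros Hc Hd. destruct (proj1 (is_derive_approx f 0 l) Hd 1 Rlt_0_1) as [d [Hd0 Happ]].
  exists d, (Rabs l + 1). split; [exact Hd0|]. intros w Hw.
  rewrite Rminus_0_r in Hw |- *. rewrite mean_value_0.
  destruct (Req_dec w 0) as [->|Hw0].
  { rewrite mean_value_0, Rminus_diag, Rabs_R0. lra. }
  destruct (MVT_gen (antideriv f) 0 w f) as [t [Ht Hmvt]].
  - intros; apply is_derive_antideriv, Hc.
  - intros x _. apply derivable_continuous_pt. exists (f x).
    apply is_derive_Reals, is_derive_antideriv, Hc.
  - rewrite antideriv_0, Rminus_0_r, Rminus_0_r, antideriv_mean_value in Hmvt.
    assert (Hmean : mean_value f w = f t)
      by (apply Rmult_eq_reg_l with w; [lra | exact Hw0]).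
    assert (Ht' : Rabs t <= Rabs w)
      by (unfold Rmin, Rmax in Ht; destruct (Rle_dec 0 w); split_Rabs; lra).
    specialize (Happ t ltac:(rewrite Rminus_0_r; lra)). rewrite Rminus_0_r in Happ.
    pose proof (Rabs_triang (f t - f 0 - l * t) (l * t)) as T.
    replace (f t - f 0 - l * t + l * t) with (f t - f 0) in T by ring.
    rewrite Rabs_mult in T. rewrite Hmean.
    pose proof (Rabs_pos l). pose proof (Rabs_pos t). nra.
Qed.

Lemma smooth_is_derive f : smooth f -> forall x, is_derive f x (Derive f x).
Proof. intros H x. apply Derive_correct, (H 1%nat). Qed.

Lemma smooth_continuous f : smooth f -> forall x, continuous f x.
Proof. intros H x. apply (ex_derive_continuous (V := R_NormedModule)), (H 1%nat). Qed.

Lemma d_x_travelling (V : R -> R) c :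
  d_x (fun t x => V (x - c * t)) = fun t x => Derive V (x - c * t).
Proof.
  apply functional_extensionality; intro t; apply functional_extensionality; intro x.
  exact (Derive_n_comp_trans V 1 x (- (c * t))).
Qed.

Lemma d_t_travelling (V : R -> R) c t x :
  ex_derive V (x - c * t) -> d_t (fun t x => V (x - c * t)) t x = - c * Derive V (x - c * t).
Proof.
  intros H. unfold d_t. apply is_derive_unique. auto_derive; [exact H|].
  rewrite Rmult_1_r. reflexivity.
Qed.

Definition profile_w (U : R -> R) (z : R) : R := U z ^ 2 - Derive U z ^ 2.
Definition profile_m (U : R -> R) (z : R) : R := U z - Derive (Derive U) z.
Definition profile_flux (f1 g1 U : R -> R) (z : R) : R :=
  (U z * f1 (profile_w U z) + g1 (profile_w U z)) * profile_m U z.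
Definition profile_h (f1 g1 : R -> R) (c : R) (U : R -> R) (z : R) : R :=
  U z * mean_value f1 (profile_w U z) + mean_value g1 (profile_w U z) - c.

Lemma solves_eq_travelling f1 g1 c U : smooth U ->
  solves_eq f1 g1 (fun t x => U (x - c * t)) ->
  forall z, - c * Derive (profile_m U) z + Derive U z * f1 (profile_w U z) * profile_m U z
            + Derive (profile_flux f1 g1 U) z = 0.
Proof.
  intros HU H z. unfold solves_eq in H. cbv zeta in H.
  rewrite !d_x_travelling in H.
  change (forall t x, d_t (fun t x => profile_m U (x - c * t)) t x
            + Derive U (x - c * t) * f1 (profile_w U (x - c * t)) * profile_m U (x - c * t)
            + d_x (fun t x => profile_flux f1 g1 U (x - c * t)) t x = 0) in H.
  rewrite d_x_travelling in H. specialize (H 0 z).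
  rewrite d_t_travelling, Rmult_0_r, Rminus_0_r in H; [exact H|].
  rewrite Rmult_0_r, Rminus_0_r. unfold profile_m.
  auto_derive. exact (conj (HU 1%nat z) (conj (HU 3%nat z) I)).
Qed.

(* [auto_derive] states its equations in Coquelicot's normed-module carrier and writes
   [Derive (fun x => f x)]; [ring] accepts neither, so both are folded back. *)
Ltac Rderive_simpl :=
  try match goal with |- ?a = ?b => change (@eq R a b) end;
  repeat match goal with
         | |- context [Derive (fun x => ?f x) ?y] =>
             change (Derive (fun x => f x) y) with (Derive f y)
         end.

Section Profile.

Variables (f1 g1 : R -> R) (c : R) (U : R -> R).
Hypotheses (Hf1 : smooth f1) (Hg1 : smooth g1) (HU : smooth U).

Let lipschitz_mean_value_f1 : lipschitz_at (mean_value f1) 0 :=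
  lipschitz_at_mean_value_0 f1 _ (smooth_continuous f1 Hf1) (smooth_is_derive f1 Hf1 0).
Let lipschitz_mean_value_g1 : lipschitz_at (mean_value g1) 0 :=
  lipschitz_at_mean_value_0 g1 _ (smooth_continuous g1 Hg1) (smooth_is_derive g1 Hg1 0).

Lemma is_derive_profile_w (z : R) : is_derive (profile_w U) z (2 * Derive U z * profile_m U z).
Proof.
  unfold profile_w, profile_m. auto_derive.
  - exact (conj (HU 1%nat z) (conj (HU 2%nat z) I)).
  - Rderive_simpl. ring.
Qed.

Lemma ex_derive_profile_m (z : R) : ex_derive (profile_m U) z.
Proof. unfold profile_m. auto_derive. exact (conj (HU 1%nat z) (conj (HU 3%nat z) I)). Qed.

Lemma ex_derive_profile_flux (z : R) : ex_derive (profile_flux f1 g1 U) z.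
Proof.
  unfold profile_flux, profile_m, profile_w. auto_derive.
  repeat split; first [apply (HU 1%nat) | apply (HU 2%nat) | apply (HU 3%nat)
                      | apply (Hf1 1%nat) | apply (Hg1 1%nat)].
Qed.

Lemma is_derive_profile_h_flat (a : R) :
  profile_w U a = 0 -> is_derive (profile_w U) a 0 ->
  is_derive (profile_h f1 g1 c U) a (Derive U a * f1 0).
Proof.
  intros Hw HdW.
  (* Naming the compositions keeps [auto_derive] from applying the chain rule through
     [mean_value], which need not be differentiable at 0. *)
  pose (p := fun z => mean_value f1 (profile_w U z)).
  pose (q := fun z => mean_value g1 (profile_w U z)).
  assert (Hp : is_derive p a 0).
  { apply (is_derive_comp_flat (mean_value f1) (profile_w U)); [rewrite Hw | exact HdW].
    exact lipschitz_mean_value_f1. }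
  assert (Hq : is_derive q a 0).
  { apply (is_derive_comp_flat (mean_value g1) (profile_w U)); [rewrite Hw | exact HdW].
    exact lipschitz_mean_value_g1. }
  apply (is_derive_ext (fun z => U z * p z + q z - c)); [reflexivity|].
  auto_derive.
  - exact (conj (HU 1%nat a) (conj (ex_intro _ 0 Hp) (conj (ex_intro _ 0 Hq) I))).
  - Rderive_simpl. rewrite (is_derive_unique _ _ _ Hp), (is_derive_unique _ _ _ Hq).
    unfold p. rewrite Hw, mean_value_0. ring.
Qed.

Section Decay.

Hypotheses (HU0 : is_lim U p_infty 0) (HU1 : is_lim (Derive U) p_infty 0)
  (HU2 : is_lim (Derive (Derive U)) p_infty 0).

Lemma is_lim_profile_w : is_lim (profile_w U) p_infty 0.
Proof.
  apply (is_lim_ext (fun z => U z * U z - Derive U z * Derive U z));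
    [intro; unfold profile_w; ring|].
  replace 0 with (0 * 0 - 0 * 0) by ring.
  apply is_lim_minus'; apply is_lim_mult_finite; assumption.
Qed.

Lemma is_lim_profile_m : is_lim (profile_m U) p_infty 0.
Proof. replace 0 with (0 - 0) by ring. apply is_lim_minus'; assumption. Qed.

Lemma is_lim_comp_profile_w (phi : R -> R) :
  continuous phi 0 -> is_lim (fun z => phi (profile_w U z)) p_infty (phi 0).
Proof. intros Hphi. exact (is_lim_comp_continuous _ _ _ _ is_lim_profile_w Hphi). Qed.

Lemma is_lim_profile_flux : is_lim (profile_flux f1 g1 U) p_infty 0.
Proof.
  replace 0 with ((0 * f1 0 + g1 0) * 0) by ring.
  apply is_lim_mult_finite; [apply is_lim_plus'; [apply is_lim_mult_finite|] |].
  - exact HU0.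
  - apply is_lim_comp_profile_w, smooth_continuous, Hf1.
  - apply is_lim_comp_profile_w, smooth_continuous, Hg1.
  - exact is_lim_profile_m.
Qed.

Lemma is_lim_profile_h : is_lim (profile_h f1 g1 c U) p_infty (g1 0 - c).
Proof.
  replace (g1 0 - c) with (0 * mean_value f1 0 + mean_value g1 0 - c)
    by (rewrite (mean_value_0 g1); ring).
  apply is_lim_minus'; [apply is_lim_plus'; [apply is_lim_mult_finite|] | apply is_lim_const].
  - exact HU0.
  - apply is_lim_comp_profile_w, continuous_lipschitz_at.
    exact lipschitz_mean_value_f1.
  - apply is_lim_comp_profile_w, continuous_lipschitz_at.
    exact lipschitz_mean_value_g1.
Qed.

Hypothesis Hode : forall z, - c * Derive (profile_m U) z
  + Derive U z * f1 (profile_w U z) * profile_m U z + Derive (profile_flux f1 g1 U) z = 0.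

Lemma profile_first_integral (z : R) :
  2 * (profile_flux f1 g1 U z - c * profile_m U z) + antideriv f1 (profile_w U z) = 0.
Proof.
  assert (HF1 := is_derive_antideriv f1 (smooth_continuous f1 Hf1)).
  revert z. apply is_derive_0_is_lim_0.
  - intro z. auto_derive.
    + repeat split; [apply ex_derive_profile_flux | apply ex_derive_profile_m
                    | eexists; apply HF1 | eexists; apply is_derive_profile_w].
    + Rderive_simpl. rewrite (is_derive_unique _ _ _ (HF1 _)),
        (is_derive_unique _ _ _ (is_derive_profile_w z)), <- (Rmult_0_r 2), <- (Hode z).
      ring.
  - replace 0 with (2 * (0 - c * 0) + antideriv f1 0) by (rewrite antideriv_0; ring).
    apply is_lim_plus'; [apply is_lim_mult_finite; [apply is_lim_const | apply is_lim_minus'] |].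
    + exact is_lim_profile_flux.
    + apply is_lim_mult_finite; [apply is_lim_const | exact is_lim_profile_m].
    + apply is_lim_comp_profile_w, (ex_derive_continuous (V := R_NormedModule)).
      eexists; apply HF1.
Qed.

Lemma profile_w_mul_h (z : R) : profile_w U z * profile_h f1 g1 c U z = 0.
Proof.
  assert (HF1 := is_derive_antideriv f1 (smooth_continuous f1 Hf1)).
  assert (HG1 := is_derive_antideriv g1 (smooth_continuous g1 Hg1)).
  revert z. apply is_derive_0_is_lim_0.
  - intro z.
    apply (is_derive_ext (fun z => U z * antideriv f1 (profile_w U z)
                                   + antideriv g1 (profile_w U z) - c * profile_w U z)).
    { intro t. Rderive_simpl. unfold profile_h. rewrite !antideriv_mean_value. ring. }
    auto_derive.
    + repeat split; [apply (HU 1%nat) | eexists; apply HF1 | eexists; apply is_derive_profile_w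
                    | eexists; apply HG1 | eexists; apply is_derive_profile_w
                    | eexists; apply is_derive_profile_w].
    + Rderive_simpl. rewrite (is_derive_unique _ _ _ (HF1 _)), (is_derive_unique _ _ _ (HG1 _)),
        (is_derive_unique _ _ _ (is_derive_profile_w z)).
      transitivity (Derive U z * (2 * (profile_flux f1 g1 U z - c * profile_m U z)
                                   + antideriv f1 (profile_w U z))).
      * unfold profile_flux. ring.
      * rewrite profile_first_integral. ring.
  - replace 0 with (0 * (g1 0 - c)) by ring.
    exact (is_lim_mult_finite _ _ _ _ _ is_lim_profile_w is_lim_profile_h).
Qed.

Lemma profile_w_eventually_0 :
  c <> g1 0 -> exists M, forall z, M < z -> profile_w U z = 0.
Proof.
  intros Hc. destruct (is_lim_nonzero_eventually _ _ is_lim_profile_h) as [M HM]; [lra|].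
  exists M. intros z Hz.
  destruct (Rmult_integral _ _ (profile_w_mul_h z)) as [Hw | Hh]; [exact Hw|].
  contradiction (HM z Hz).
Qed.

Lemma profile_w_somewhere_nonzero :
  is_lim U m_infty 0 -> (exists x, U x <> 0) -> exists z, profile_w U z <> 0.
Proof.
  intros HUm [x Hx].
  assert (Hsq : forall z, is_derive (fun z => U z * U z) z (2 * U z * Derive U z)).
  { intro z. auto_derive; [exact (conj (HU 1%nat z) (conj (HU 1%nat z) I)) | Rderive_simpl; ring]. }
  assert (Hx2 : 0 < U x * U x) by (pose proof (Rsqr_pos_lt _ Hx); unfold Rsqr in *; lra).
  destruct (continuous_vanishing_at_infinity_max (fun z => U z * U z) x) as [m Hm].
  - intro z. apply (ex_derive_continuous (V := R_NormedModule)). eexists. apply Hsq.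
  - replace 0 with (0 * 0) by ring. apply is_lim_mult_finite; exact HU0.
  - replace 0 with (0 * 0) by ring. apply is_lim_mult_finite; exact HUm.
  - exact Hx2.
  - pose proof (is_derive_global_max _ _ _ (Hsq m) Hm) as Hcrit.
    assert (Hm0 : 0 < U m * U m) by (specialize (Hm x); lra).
    destruct (Rmult_integral _ _ Hcrit) as [HUm' | HUm']; [nra|].
    exists m. unfold profile_w. rewrite HUm'. intro H0. simpl in H0. nra.
Qed.

Lemma no_solitary_profile :
  c <> g1 0 -> is_lim U m_infty 0 -> (exists x, U x <> 0) -> False.
Proof.
  intros Hc HUm HUnz.
  destruct (exists_right_end_of_support (profile_w U)) as [a [Hwa [HdW Hleft]]].
  - intro z. eexists. apply is_derive_profile_w.
  - exact (profile_w_eventually_0 Hc).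
  - exact (profile_w_somewhere_nonzero HUm HUnz).
  - destruct (is_derive_at_cluster_of_zeros _ a _ (is_derive_profile_h_flat a Hwa HdW))
      as [Hha Hdha].
    { intros r Hr. destruct (Hleft r Hr) as [y [Hy Hwy]]. exists y.
      split; [split_Rabs; lra|].
      destruct (Rmult_integral _ _ (profile_w_mul_h y)); [contradiction | assumption]. }
    unfold profile_h in Hha. rewrite Hwa, !mean_value_0 in Hha.
    unfold profile_w in Hwa.
    destruct (Rmult_integral _ _ Hdha) as [HU'a | Hf0].
    + rewrite HU'a in Hwa. simpl in Hwa.
      assert (U a = 0) by nra. apply Hc. nra.
    + rewrite Hf0 in Hha. apply Hc. lra.
Qed.

End Decay.

End Profile.

Theorem proposition1 (f1 g1 : R -> R) (Hf1 : smooth f1) (Hg1 : smooth g1) :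
  (forall c : R, c <> 0 -> c <> g1 0 ->
     ~ exists U : R -> R, smooth_solitary_tw f1 g1 c U) /\
  (g1 0 = 0 ->
     forall c : R, c <> 0 -> ~ exists U : R -> R, smooth_solitary_tw f1 g1 c U).
Proof.
  assert (Hnone : forall c, c <> g1 0 -> ~ exists U, smooth_solitary_tw f1 g1 c U).
  { intros c Hc [U [HU [HUnz [Hlim Hsol]]]].
    exact (no_solitary_profile f1 g1 c U Hf1 Hg1 HU (proj1 (Hlim 0%nat)) (proj1 (Hlim 1%nat))
             (proj1 (Hlim 2%nat)) (solves_eq_travelling f1 g1 c U HU Hsol)
             Hc (proj2 (Hlim 0%nat)) HUnz). }
  split.
  - intros c _ Hc. exact (Hnone c Hc).
  - intros Hg0 c Hc. apply Hnone. rewrite Hg0. exact Hc.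
Qed.
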